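(* Let $X_i$ be a separable $\mathbb{R}$-rigid space for each $i\in I$. If a subspace $Y$ of $X=\prod_{i\in I}X_i$ fills all countable subproducts of $X$, then $Y$ is $\mathbb{R}$-rigid.
   Context: For nonempty $J\subseteq I$, $\pi_J\colon X\to X_J=\prod_{i\in J}X_i$ is the projection. A set $Y\subseteq X$ fills countable subproducts of $X$ if $\pi_J(Y)=X_J$ for every countable nonempty $J\subseteq I$. A space is $\mathbb{R}$-rigid if every continuous real-valued function on it is constant. *)

From HB Require Import structures.
From mathcomp Require Import all_boot all_order all_algebra.
From mathcomp Require Import all_classical all_reals all_analysis.
Set Implicit Arguments. Unset Strict Implicit. Unset Printing Implicit Defensive.
Import Order.TTheory GRing.Theory Num.Theory numFieldTopology.Exports.
Local Open Scope classical_set_scope.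
Local Open Scope ring_scope.

Definition separable (T : topologicalType) : Prop :=
  exists D : set T, countable D /\ dense D.

Definition R_rigid (R : realType) (T : topologicalType) : Prop :=
  forall f : T -> R, continuous f -> forall x y : T, f x = f y.

Definition R_rigid_subspace (R : realType) (T : topologicalType) (Y : set T) : Prop :=
  forall f : T -> R, {within Y, continuous f} ->
  forall x y : T, Y x -> Y y -> f x = f y.

Definition fills_countable_subproducts (I : Type) (X : I -> topologicalType)
    (Y : set (prod_topology X)) : Prop :=
  forall J : set I, countable J -> J !=set0 ->
  forall z : (forall j : {i : I | J i}, X (proj1_sig j)),
  exists y : prod_topology X, Y y /\ forall j : {i : I | J i}, y (proj1_sig j) = z j.

From HB Require Import structures.
From mathcomp Require Import all_boot all_order all_algebra.
From mathcomp Require Import all_classical all_reals all_analysis.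
From mathcomp Require Import lra.
Set Implicit Arguments. Unset Strict Implicit. Unset Printing Implicit Defensive.
Import Order.TTheory GRing.Theory Num.Theory numFieldTopology.Exports.
Local Open Scope classical_set_scope.
Local Open Scope ring_scope.

(* A function f continuous on Y depends on countably many coordinates.  Fix
   countable dense sequences in the factors and close a set J of indices,
   starting from the empty set, under the step: for each finite assignment of
   dense points to coordinates in J, take a point of Y realizing it (Y fills
   countable subproducts) and add the coordinates of basic boxes around it on
   which f oscillates by less than 1/(n+1).  Every nonempty basic box supported
   in the countable closure J then contains such a probe point, and comparing
   two points of Y that agree on J with a common probe shows that f takes the
   same value at both.  Hence w |-> f y_w, for any y_w in Y agreeing with w on
   J, is a continuous extension of f to the whole product.  Finally a product of
   R-rigid spaces is R-rigid: a continuous function does not change when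
   finitely many coordinates are changed one at a time, and every neighbourhood
   contains a basic box, which constrains only finitely many coordinates. *)

Lemma countableU (T : Type) (A B : set T) :
  countable A -> countable B -> countable (A `|` B).
Proof.
by move=> cA cB; rewrite -bigcup2E; apply: bigcup_countable => // -[|[|n]] _.
Qed.

Lemma countable_closure (T : Type) (c : set T -> set T) :
  {homo c : A B / A `<=` B} -> (forall A, countable A -> countable (c A)) ->
  exists J, countable J /\ forall F, finite_set F -> F `<=` J -> c F `<=` J.
Proof.
elim/Pchoice: T => T in c *; move=> c_homo c_countable.
pose stage k := iter k (fun A => A `|` c A) set0.
have stage_countable k : countable (stage k).
  by elim: k => //= k ?; apply: countableU => //; exact: c_countable.
have stage_mono k l : (k <= l)%N -> stage k `<=` stage l.
  elim: l => [|l IH]; first by rewrite leqn0 => /eqP ->.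
  by rewrite leq_eqVlt ltnS => /predU1P [-> //|/IH kl t /kl]; left.
exists (\bigcup_k stage k); split; first exact: bigcup_countable.
move=> F /finite_seqP [s ->] sJ.
have [k sk] : exists k, [set` s] `<=` stage k.
  elim: s sJ => [|i s IH] sJ; first by exists 0%N.
  have [k _ ik] := sJ i (mem_head i s).
  have [l sl] : exists l, [set` s] `<=` stage l.
    by apply: IH => j js; apply: sJ; rewrite /= inE js orbT.
  exists (maxn k l) => j; rewrite /= inE => /predU1P [->|js].
    exact: stage_mono (leq_maxl k l) _ ik.
  exact: stage_mono (leq_maxr k l) _ (sl j js).
by move=> t /(c_homo _ _ sk) ckt; exists k.+1 => //; right.
Qed.

Lemma separable_dense_range (T : topologicalType) (t0 : T) :
  separable T -> exists d : nat -> T, dense (range d).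
Proof.
move=> [D [/countable_injP [phi phi_inj] D_dense]].
exists (fun b => xget t0 [set x | D x /\ phi x = b]).
move=> O O0 oO; have [x [Ox Dx]] := D_dense O O0 oO.
exists x; split => //; exists (phi x) => //.
have [Dy phix] : [set y | D y /\ phi y = phi x] (xget t0 [set y | D y /\ phi y = phi x]).
  by apply: xgetPex; exists x.
by apply: phi_inj; rewrite ?inE.
Qed.

Section product_boxes.
Context {I : choiceType} {X : I -> topologicalType}.
Local Notation PX := (prod_topology X).

Definition box (W : forall i, set (X i)) : set PX := [set z | forall i, W i (z i)].

Definition open_box (F : set I) (W : forall i, set (X i)) : Prop :=
  [/\ finite_set F, forall i, open (W i) & forall i, ~ F i -> W i = setT].

Lemma open_boxI F1 W1 F2 W2 : open_box F1 W1 -> open_box F2 W2 ->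
  open_box (F1 `|` F2) (fun i => W1 i `&` W2 i).
Proof.
move=> [fF1 oW1 W1T] [fF2 oW2 W2T]; split => [|i|i].
- by rewrite finite_setU.
- exact: openI.
- by move=> /not_orP [/W1T -> /W2T ->]; rewrite setIT.
Qed.

Lemma open_box_restrict (J F : set I) W : open_box F W ->
  open_box (F `&` J) (fun i => if pselect (J i) then W i else setT).
Proof.
move=> [fF oW WT]; split => [|i|i]; first exact: finite_setIl.
  by case: (pselect (J i)) => Ji //; exact: openT.
by case: (pselect (J i)) => Ji // nFJ; apply: WT => Fi; exact: nFJ.
Qed.

Lemma open_box_open F W : open_box F W -> open (box W).
Proof.
move=> [/finite_seqP [s ->] oW WT].
have -> : box W = [set z | forall i, i \in s -> W i (z i)].
  apply/seteqP; split => z zW i; first by move=> _; exact: zW.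
  by have [/zW //|/negP /WT ->] := boolP (i \in s).
elim: s {WT} => [|i s IH].
  have -> : [set z : PX | forall i, i \in [::] -> W i (z i)] = setT
    by apply/seteqP; split => // z _ i.
  exact: openT.
have -> : [set z : PX | forall j, j \in i :: s -> W j (z j)] =
    proj i @^-1` W i `&` [set z | forall j, j \in s -> W j (z j)].
  apply/seteqP; split => z /=.
    by move=> zW; split => [|j js]; apply: zW; rewrite inE ?eqxx ?js ?orbT.
  by move=> [zWi zW] j; rewrite inE => /predU1P [->|/zW].
by apply: openI => //; apply: open_comp => // z _; exact: proj_continuous.
Qed.

Lemma nbhs_open_box (u : PX) (B : set PX) :
  nbhs u B -> exists F W, [/\ open_box F W, box W u & box W `<=` B].
Proof.
pose G := [set B : set PX | exists F W, [/\ open_box F W, box W u & box W `<=` B]].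
have G_filter : Filter G.
  split.
  - exists set0, (fun=> setT); split => //; split => // i; exact: openT.
  - move=> B1 B2 [F1 [W1 [oW1 uW1 W1B]]] [F2 [W2 [oW2 uW2 W2B]]].
    exists (F1 `|` F2), (fun i => W1 i `&` W2 i); split; first exact: open_boxI.
      by move=> i; split.
    by move=> z zW; split; [apply: W1B | apply: W2B] => i; case: (zW i).
  - move=> B1 B2 B12 [F [W [oW uW WB]]].
    by exists F, W; split => // z /WB /B12.
apply: (proj2 (@cvg_sup _ _ _ G u G_filter)) => i A /= [_ [[V oV <-] uV] VA].
exists [set i], (dfwith (fun=> setT) i V); split.
- split => [|j|j]; first exact: finite_set1.
  + by case: dfwithP => // k _; exact: openT.
  + by case: dfwithP => // /(_ erefl).
- by move=> j; case: dfwithP.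
- by move=> z /(_ i); rewrite dfwithin => /VA.
Qed.

Lemma R_rigid_finite_modification (R : realType) (g : PX -> R) :
  (forall i, R_rigid R (X i)) -> continuous g ->
  forall p z : PX, finite_set [set i | z i <> p i] -> g z = g p.
Proof.
move=> rX cg p z /finite_seqP [s zs].
have {zs} : [set i | z i <> p i] `<=` [set` s] by rewrite zs.
elim: s z => [|i s IH] z zs.
  by congr g; apply: functional_extensionality_dep => j; apply: contrapT => /zs.
have -> : g z = g (dfwith z i (p i)).
  have slice_cont : continuous (g \o dfwith z i).
    by move=> t; apply: continuous_comp; [exact: dfwith_continuous | exact: cg].
  have {1}-> : z = dfwith z i (z i).
    by apply: functional_extensionality_dep => j; case: dfwithP.
  exact: (rX i _ slice_cont (z i) (p i)).
apply: IH => j /=; case: dfwithP => [/(_ erefl) [] | k ik /zs].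
by rewrite /= inE => /predU1P [kE|//]; rewrite kE eqxx in ik.
Qed.

Lemma prod_R_rigid (R : realType) :
  (forall i, R_rigid R (X i)) -> R_rigid R PX.
Proof.
move=> rX g cg w p; apply/eqP/negPn/negP => gwp.
have /cg : nbhs (g w) [set r | r != g p].
  by apply: open_nbhs_nbhs; split => //; exact: open_neq.
case/nbhs_open_box => F [W [[fF _ WT] wW WB]].
pose z : PX := fun i => if pselect (F i) then w i else p i.
have zW : box W z.
  by move=> i; rewrite /z; case: (pselect (F i)) => [?|?]; [exact: wW | rewrite WT].
have := WB z zW; rewrite /= (R_rigid_finite_modification rX cg (p := p)) ?eqxx //.
apply: sub_finite_set fF => i /=; rewrite /z.
by case: (pselect (F i)) => [// | _ /(_ erefl)].
Qed.

End product_boxes.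

Section countable_support.
Context {R : realType} {I : choiceType} {X : I -> topologicalType}.
Local Notation PX := (prod_topology X).
Variables (Y : set PX) (x0 : PX).
Hypotheses (Yx0 : Y x0) (Y_fills : fills_countable_subproducts Y).

Lemma fill_countable (A : set I) (q : PX) :
  countable A -> exists2 y, Y y & forall i, A i -> y i = q i.
Proof.
move=> cA; have [->|/set0P A0] := eqVneq A set0; first by exists x0.
have [y [Yy yq]] := Y_fills cA A0 (fun j => q (proj1_sig j)).
by exists y => // i Ai; exact: (yq (exist _ i Ai)).
Qed.

Lemma fill_patch (A B : set I) (w u : PX) : countable A -> countable B ->
  exists t, [/\ Y t, forall i, A i -> t i = w i & forall i, B i -> ~ A i -> t i = u i].
Proof.
move=> cA cB.
have [t Yt tE] := fill_countable (fun i => if pselect (A i) then w i else u i)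
  (countableU cA cB).
exists t; split => // i => [Ai|Bi nAi].
- by rewrite tE; [case: (pselect (A i)) | left].
- by rewrite tE; [case: (pselect (A i)) | right].
Qed.

Variable f : PX -> R.
Hypothesis f_cont : {within Y, continuous f}.

Definition small_box (s : PX) (e : R) (G : set I) (V : forall i, set (X i)) :=
  [/\ open_box G V, box V s & forall z, box V z -> Y z -> `|f s - f z| < e].

Lemma exists_small_box (s : PX) (e : R) :
  Y s -> 0 < e -> exists G V, small_box s e G V.
Proof.
move=> Ys e0; have := (subspace_continuousP Y f).1 f_cont s Ys.
move=> /(_ _ (nbhsx_ballx (f s) _ e0)) /nbhs_open_box [G [V [oV sV VB]]].
by exists G, V; split => // z Vz Yz; exact: VB z Vz Yz.
Qed.

Definition approximable (J : set I) : Prop :=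
  forall F W u e, F `<=` J -> open_box F W -> box W u -> 0 < e ->
  exists s G V, [/\ box W s, G `<=` J & small_box s e G V].

Lemma approximable_agree (J : set I) : countable J -> approximable J ->
  forall u v, Y u -> Y v -> (forall i, J i -> u i = v i) -> f u = f v.
Proof.
move=> cJ aJ u v Yu Yv uv; apply/eqP/negPn/negP => fuv.
set D := `|f u - f v|.
have D4 : 0 < D / 4 by rewrite divr_gt0 // normr_gt0 subr_eq0.
have [Fu [Wu [oWu uWu u_osc]]] := exists_small_box Yu D4.
have [Fv [Wv [oWv vWv v_osc]]] := exists_small_box Yv D4.
pose W i := if pselect (J i) then Wu i `&` Wv i else setT.
have oW : open_box ((Fu `|` Fv) `&` J) W := open_box_restrict J (open_boxI oWu oWv).
have uW : box W u.
  move=> i; rewrite /W; case: (pselect (J i)) => Ji //.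
  by split; [exact: uWu | rewrite uv //; exact: vWv].
have [s [G [V [sW GJ [[_ _ VT] sV s_osc]]]]] := aJ _ _ _ _ (@subIsetr _ _ _) oW uW D4.
(* t copies s on J and u elsewhere, so it lies both in the small box of s and
   in that of u; likewise t' for v.  Then |f u - f v| < 4 (D / 4). *)
have patch F0 W0 (u0 : PX) : open_box F0 W0 -> box W0 u0 ->
    (forall i, J i -> W i (s i) -> W0 i (s i)) ->
    exists2 t, Y t & box V t /\ box W0 t.
  move=> [fF0 _ W0T] uW0 WW0.
  have [t [Yt ts tu]] := fill_patch s u0 cJ (finite_set_countable fF0).
  exists t => //; split => i.
    have [Gi|/VT -> //] := pselect (G i).
    by rewrite ts; [exact: sV | exact: GJ].
  have [Ji|nJi] := pselect (J i); first by rewrite ts //; exact: WW0.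
  have [F0i|/W0T -> //] := pselect (F0 i).
  by rewrite tu //; exact: uW0.
have [t Yt [Vt Wut]] : exists2 t, Y t & box V t /\ box Wu t.
  by apply: patch oWu uWu _ => i Ji; rewrite /W; case: (pselect (J i)) => [_ []|].
have [t' Yt' [Vt' Wvt']] : exists2 t, Y t & box V t /\ box Wv t.
  by apply: patch oWv vWv _ => i Ji; rewrite /W; case: (pselect (J i)) => [_ []|].
have := u_osc t Wut Yt; have := v_osc t' Wvt' Yt'.
have := s_osc t Vt Yt; have := s_osc t' Vt' Yt'.
have := ler_distD (f t) (f u) (f v); have := ler_distD (f s) (f t) (f v).
have := ler_distD (f t') (f s) (f v).
rewrite (distrC (f t) (f s)) (distrC (f t') (f v)) -/D.
by clearbody D; lra.
Qed.

Section closing_off.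
Variable d : forall i, nat -> X i.
Hypothesis d_dense : forall i, dense (range (d i)).
Variable sbox : PX -> nat -> set I * (forall i, set (X i)).
Hypothesis sboxP : forall s n, Y s -> small_box s n.+1%:R^-1 (sbox s n).1 (sbox s n).2.

(* A finite P : set (I * nat) is read as the partial assignment i |-> d i b of
   dense points to coordinates; when no point of Y realizes it, probe P is the
   junk value x0, which is still in Y. *)
Definition probe (P : set (I * nat)) : PX :=
  xget x0 [set y | Y y /\ forall i b, P (i, b) -> y i = d i b].

Lemma probeY P : Y (probe P).
Proof. by rewrite /probe; case: xgetP => [y _ []|]. Qed.

Definition probe_coords (A : set I) : set I :=
  \bigcup_(P in [set P | P `<=` A `*` setT /\ finite_set P])
    \bigcup_n (sbox (probe P) n).1.

Lemma probe_coords_homo : {homo probe_coords : A B / A `<=` B}.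
Proof.
move=> A B AB i [P [PA fP] Pi]; exists P => //; split => //.
by move=> ib /PA [/AB].
Qed.

Lemma probe_coords_countable A : countable A -> countable (probe_coords A).
Proof.
move=> cA; apply: bigcup_countable => [|P _].
  exact/countable_finite_subset/countableX.
apply: bigcup_countable => // n _; apply: finite_set_countable.
by have [[]] := sboxP n (probeY P).
Qed.

Lemma approximable_probe_closed J :
  (forall F, finite_set F -> F `<=` J -> probe_coords F `<=` J) -> approximable J.
Proof.
move=> J_closed F W u e FJ [fF oW WT] uW e0.
have /choice [b bW] : forall i, exists b, W i (d i b).
  move=> i; have [x [Wx [b _ bx]]] := d_dense (ex_intro _ _ (uW i)) (oW i).
  by exists b; rewrite bx.
pose P := [set (i, b i) | i in F].
have probeP i : F i -> probe P i = d i (b i).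
  have [y Yy yb] := fill_countable (fun i => d i (b i)) (finite_set_countable fF).
  have [_ yP] : [set y | Y y /\ forall i b', P (i, b') -> y i = d i b'] (probe P).
    by apply: xgetPex; exists y; split => // j b' [k Fk [<- <-]]; exact: yb.
  by move=> Fi; apply: yP; exists i.
have [n ne] : exists n : nat, n.+1%:R^-1 < e.
  by have [n] := ltr_add_invr e0; rewrite add0r; exists n.
have [oV sV s_osc] := sboxP n (probeY P).
exists (probe P), (sbox (probe P) n).1, (sbox (probe P) n).2; split.
- by move=> i; have [/probeP ->|/WT ->] := pselect (F i).
- apply: subset_trans (J_closed F fF FJ) => i Gi; exists P; last by exists n.
  by split; [move=> _ [j Fj <-] | exact: finite_image].
- by split => // z Vz Yz; exact: lt_trans (s_osc z Vz Yz) ne.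
Qed.

End closing_off.

Lemma exists_approximable : (forall i, separable (X i)) ->
  exists J, countable J /\ approximable J.
Proof.
move=> sepX.
have /all_sig [d d_dense] := fun i => cid (separable_dense_range (x0 i) (sepX i)).
have [sbox sboxP] : exists sbox : PX -> nat -> set I * (forall i, set (X i)),
    forall s n, Y s -> small_box s n.+1%:R^-1 (sbox s n).1 (sbox s n).2.
  have /choice [sb sbP] : forall sn : PX * nat, exists GV,
      Y sn.1 -> small_box sn.1 sn.2.+1%:R^-1 GV.1 GV.2.
    case=> s n; have [Ys|nYs] := pselect (Y s); last by exists (set0, fun=> setT).
    have n_gt0 : 0 < n.+1%:R^-1 :> R by rewrite invr_gt0 ltr0Sn.
    by have [G [V ?]] := exists_small_box Ys n_gt0; exists (G, V).
  by exists (fun s n => sb (s, n)) => s n; exact: sbP (s, n).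
have [J [cJ J_closed]] := countable_closure
  (probe_coords_homo (d := d) (sbox := sbox)) (probe_coords_countable d sboxP).
exists J; split => //.
exact: (approximable_probe_closed d_dense sboxP J_closed).
Qed.

Definition lift_to (J : set I) (w : PX) : PX :=
  xget x0 [set y | Y y /\ forall i, J i -> y i = w i].

Lemma lift_toP (J : set I) (w : PX) : countable J ->
  Y (lift_to J w) /\ forall i, J i -> lift_to J w i = w i.
Proof.
move=> cJ; apply: (@xgetPex _ x0 [set y | Y y /\ forall i, J i -> y i = w i]).
by have [y Yy yw] := fill_countable w cJ; exists y.
Qed.

Section extension.
Variable J : set I.
Hypotheses (cJ : countable J)
  (f_J : forall u v, Y u -> Y v -> (forall i, J i -> u i = v i) -> f u = f v).

Definition extension : PX -> R := f \o lift_to J.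

Lemma extension_eq y : Y y -> extension y = f y.
Proof. by move=> Yy; have [Yl lE] := lift_toP y cJ; exact: f_J. Qed.

Lemma extension_continuous : continuous extension.
Proof.
move=> w N /=; set u := lift_to J w; have [Yu uw] := lift_toP w cJ.
move=> /((subspace_continuousP Y f).1 f_cont u Yu) /nbhs_open_box.
move=> [F [W [oW uW WN]]]; have [fF _ WT] := oW.
pose W' i := if pselect (J i) then W i else setT.
apply: (@filterS _ _ _ (box W')).
  move=> w' w'W'; have [t [Yt tw' tu]] := fill_patch w' u cJ (finite_set_countable fF).
  have tW : box W t.
    move=> i; have [Ji|nJi] := pselect (J i).
      by rewrite tw' //; move: (w'W' i); rewrite /W'; case: (pselect (J i)).
    by have [Fi|/WT -> //] := pselect (F i); rewrite tu.
  have [Yl lw'] := lift_toP w' cJ.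
  rewrite /extension /= (f_J Yl Yt) => [|i Ji]; first exact: WN.
  by rewrite lw' // tw'.
apply: open_nbhs_nbhs; split.
  exact: open_box_open (open_box_restrict J oW).
by move=> i; rewrite /W'; case: (pselect (J i)) => Ji //; rewrite -uw.
Qed.

End extension.

End countable_support.

Theorem corollary3p6 (R : realType) (I : Type) (X : I -> topologicalType)
    (Y : set (prod_topology X)) :
  (forall i, separable (X i)) ->
  (forall i, R_rigid R (X i)) ->
  fills_countable_subproducts Y ->
  R_rigid_subspace R Y.
Proof.
elim/Pchoice: I => I in X Y *.
move=> sepX rigX Y_fills f f_cont x y Yx Yy.
have [J [cJ aJ]] := exists_approximable Yx Y_fills f_cont sepX.
have f_J := approximable_agree Yx Y_fills f_cont cJ aJ.
rewrite -(extension_eq Yx Y_fills cJ f_J Yx) -(extension_eq Yx Y_fills cJ f_J Yy).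
exact: (prod_R_rigid rigX (extension_continuous Yx Y_fills f_cont cJ f_J) x y).
Qed.
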